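(* Let $f_{N_2G}(x)=\left(\frac{\sqrt x+1}{2}\right)\sqrt{\frac{x+1}{2}}-\sqrt x$ for $x\in(0,\infty)$, let $f_{N_2G}^*(u)=u\,f_{N_2G}\!\left(\frac{1-u}{u}\right)$ for $u\in(0,1)$, extended by continuity to $[0,1]$ (explicitly $f_{N_2G}^*(u)=\frac{\sqrt2}{4}\left(\sqrt u+\sqrt{1-u}\right)-\sqrt{u(1-u)}$), and define $\overline M_{N_2G}(C_1,C_2)=E_X\{f_{N_2G}^*(P(C_2\mid x))\}$. Then $$P_e\le \frac12\left[1-\frac{4}{\sqrt2}\,\overline M_{N_2G}(C_1,C_2)\right].$$
   Context: Two-class decision problem: classes $C_1,C_2$, an observation $x$ in a space $\mathrm X$ with density $p(x)$, and a posteriori probabilities $P(C_1\mid x),P(C_2\mid x)\ge0$ with $P(C_1\mid x)+P(C_2\mid x)=1$. $E_X\{g(x)\}=\int_{\mathrm X} g(x)p(x)\,dx$. $P_e=E_X\{\min(P(C_1\mid x),P(C_2\mid x))\}$ is the Bayesian probability of error. *)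

From HB Require Import structures.
From mathcomp Require Import all_boot all_order all_algebra.
From mathcomp Require Import all_classical all_reals all_analysis.
Set Implicit Arguments. Unset Strict Implicit. Unset Printing Implicit Defensive.
Import Order.TTheory GRing.Theory Num.Theory.
Local Open Scope ring_scope.

Definition fN2G {R : realType} (x : R) : R :=
  ((Num.sqrt x + 1) / 2) * Num.sqrt ((x + 1) / 2) - Num.sqrt x.

(* f*(u) = u f((1-u)/u) on (0,1), extended by continuity to [0,1];
   the continuous extension at u = 0 and u = 1 equals sqrt 2 / 4
   (from the explicit formula (sqrt2/4)(sqrt u + sqrt(1-u)) - sqrt(u(1-u))). *)
Definition fN2G_star {R : realType} (u : R) : R :=
  if (0 < u) && (u < 1) then u * fN2G ((1 - u) / u) else Num.sqrt 2 / 4.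

(* E_X{g} = \int_X g(x) p(x) dx, with mu the reference measure on X *)
Definition EX {d : measure_display} {T : measurableType d} {R : realType}
  (mu : {measure set T -> \bar R}) (p : T -> R) (g : T -> R) : \bar R :=
  (\int[mu]_(x in [set: T]) (g x * p x)%:E)%E.

Definition Pe {d : measure_display} {T : measurableType d} {R : realType}
  (mu : {measure set T -> \bar R}) (p P1 P2 : T -> R) : \bar R :=
  EX mu p (fun x => Num.min (P1 x) (P2 x)).

Definition MbarN2G {d : measure_display} {T : measurableType d} {R : realType}
  (mu : {measure set T -> \bar R}) (p P2 : T -> R) : \bar R :=
  EX mu p (fun x => fN2G_star (P2 x)).

(* Writing a = sqrt u and b = sqrt (1 - u), the function f* becomes
   (sqrt 2 / 4) (a + b) - a b with a^2 + b^2 = 1, and the pointwise inequality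
   min (a^2, b^2) + sqrt 2 f*(u) <= 1/2 reduces, with t = |b - a| <= 1, to
   (1 - t) (sqrt 2 (1 + t) - (a + b)) >= 0, which holds since a + b <= sqrt 2.
   Integrating it against the density p gives the bound on P_e. *)

From HB Require Import structures.
From mathcomp Require Import all_boot all_order all_algebra.
From mathcomp Require Import all_classical all_reals all_analysis.
From mathcomp Require Import ring lra measurable_realfun.
Set Implicit Arguments. Unset Strict Implicit. Unset Printing Implicit Defensive.
Import Order.TTheory GRing.Theory Num.Theory.
Local Open Scope ring_scope.

Section PointwiseBound.
Context {R : realType}.

Definition fN2G_star_closed (u : R) : R :=
  Num.sqrt 2 / 4 * (Num.sqrt u + Num.sqrt (1 - u)) - Num.sqrt (u * (1 - u)).

Lemma sqrt2_gt0 : 0 < Num.sqrt (2 : R).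
Proof. by rewrite sqrtr_gt0; lra. Qed.

Lemma sqr_sqrt2 : Num.sqrt (2 : R) ^+ 2 = 2.
Proof. by rewrite sqr_sqrtr //; lra. Qed.

Lemma fN2G_starE (u : R) : 0 <= u <= 1 -> fN2G_star u = fN2G_star_closed u.
Proof.
move=> /andP[u_ge0 u_le1]; rewrite /fN2G_star /fN2G_star_closed sqrtrM //.
case: ifPn => [/andP[u_gt0 u_lt1]|].
  have s_gt0 := sqrt2_gt0; have s2 := sqr_sqrt2.
  set a := Num.sqrt u; set b := Num.sqrt (1 - u); set s := Num.sqrt 2.
  have a_gt0 : 0 < a by rewrite sqrtr_gt0.
  have b_ge0 : 0 <= b by rewrite sqrtr_ge0.
  have ua : u = a ^+ 2 by rewrite sqr_sqrtr.
  have ub : 1 - u = b ^+ 2 by rewrite sqr_sqrtr //; lra.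
  have sqrt_ratio : Num.sqrt ((1 - u) / u) = b / a.
    by rewrite ub ua -expr_div_n sqrtr_sqr ger0_norm // divr_ge0 // ltW.
  have sqrt_mean : Num.sqrt (((1 - u) / u + 1) / 2) = 1 / (s * a).
    rewrite (_ : ((1 - u) / u + 1) / 2 = (1 / (s * a)) ^+ 2).
      by rewrite sqrtr_sqr ger0_norm // divr_ge0 // mulr_ge0 // ltW.
    by rewrite expr_div_n exprMn s2 -ua; field; lra.
  have -> : (4 : R) = 2 * s ^+ 2 by rewrite s2; lra.
  by rewrite /fN2G sqrt_ratio sqrt_mean ua; field; rewrite !gt_eqF.
rewrite negb_and -!leNgt => u_out.
have {u_out}[->|->] : u = 0 \/ u = 1.
  by case/orP: u_out => ?; [left|right]; apply/eqP; rewrite eq_le; apply/andP.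
- by rewrite subr0 sqrtr0 sqrtr1 add0r mul0r mulr1 subr0.
- by rewrite subrr sqrtr0 sqrtr1 addr0 mulr0 mulr1 subr0.
Qed.

Lemma sqr_minr_add_le (a b : R) : 0 <= a -> 0 <= b -> a ^+ 2 + b ^+ 2 = 1 ->
  Num.min (a ^+ 2) (b ^+ 2)
    + Num.sqrt 2 * (Num.sqrt 2 / 4 * (a + b) - a * b) <= 1 / 2.
Proof.
move: (Num.sqrt 2) sqrt2_gt0 sqr_sqrt2 => s s_gt0 s2.
wlog ab : a b / a <= b => [hwlog a_ge0 b_ge0 ab1|a_ge0 b_ge0 ab1].
  have [/hwlog|ba] := lerP a b; first exact.
  by rewrite minC (addrC a) (mulrC a); apply: hwlog; rewrite 1?addrC // ltW.
rewrite (min_idPl _); last by rewrite lerXn2r // nnegrE.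
have sum_le_s : a + b <= s by have := sqr_ge0 (a - b); nra.
have t_le1 : b - a <= 1 by nra.
have key : 0 <= (1 - (b - a)) * (s * (1 + (b - a)) - (a + b)).
  by apply: mulr_ge0; nra.
nra.
Qed.

Lemma minr_add_fN2G_star_le (u : R) : 0 <= u <= 1 ->
  Num.min (1 - u) u + (4 / Num.sqrt 2) / 2 * fN2G_star u <= 1 / 2.
Proof.
move=> u01; have /andP[u_ge0 u_le1] := u01.
have -> : (4 / Num.sqrt 2) / 2 = Num.sqrt (2 : R).
  have -> : (4 : R) = 2 * Num.sqrt 2 ^+ 2 by rewrite sqr_sqrt2; lra.
  by field; rewrite gt_eqF ?sqrt2_gt0.
rewrite fN2G_starE // /fN2G_star_closed sqrtrM //.
have ua : u = Num.sqrt u ^+ 2 by rewrite sqr_sqrtr.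
have ub : 1 - u = Num.sqrt (1 - u) ^+ 2 by rewrite sqr_sqrtr //; lra.
rewrite minC {1}ua {1}ub.
by apply: sqr_minr_add_le; rewrite ?sqrtr_ge0 // -ua -ub addrC subrK.
Qed.

Lemma normr_fN2G_star_le1 (u : R) : 0 <= u <= 1 -> `|fN2G_star u| <= 1.
Proof.
move=> u01; have /andP[u_ge0 u_le1] := u01.
rewrite fN2G_starE // /fN2G_star_closed sqrtrM //.
have s_gt0 := sqrt2_gt0; have s2 := sqr_sqrt2.
have ua : u = Num.sqrt u ^+ 2 by rewrite sqr_sqrtr.
have ub : 1 - u = Num.sqrt (1 - u) ^+ 2 by rewrite sqr_sqrtr //; lra.
have a_ge0 := sqrtr_ge0 u; have b_ge0 := sqrtr_ge0 (1 - u).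
set a := Num.sqrt u in ua a_ge0 *; set b := Num.sqrt (1 - u) in ub b_ge0 *.
set s := Num.sqrt 2 in s_gt0 s2 *.
have a_le1 : a <= 1 by nra.
have b_le1 : b <= 1 by nra.
have s_le2 : s <= 2 by nra.
have ab_ge0 : 0 <= a * b by apply: mulr_ge0.
have ab_le1 : a * b <= 1 by nra.
have sab_le4 : s * (a + b) <= 4 by nra.
rewrite ler_norml; apply/andP; split; nra.
Qed.

Lemma measurable_fN2G_star_closed : measurable_fun setT fN2G_star_closed.
Proof.
have msqrt : measurable_fun setT (@Num.sqrt R).
  by apply: continuous_measurable_fun; exact: sqrt_continuous.
have m1B : measurable_fun setT (fun u : R => 1 - u) by apply: measurable_funB.
apply: measurable_funB; last first.
  by apply: measurableT_comp msqrt _; exact: measurable_funM.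
apply: measurable_funM => //; apply: measurable_funD.
  exact: msqrt.
exact: measurableT_comp msqrt m1B.
Qed.

End PointwiseBound.

Section ExpectationBound.
Context d (T : measurableType d) (R : realType) (mu : {measure set T -> \bar R}).
Variable p : T -> R.
Hypothesis p_meas : measurable_fun setT p.
Hypothesis p_ge0 : forall x, 0 <= p x.
Hypothesis p_int1 : (\int[mu]_(x in setT) (p x)%:E = 1)%E.

Local Open Scope ereal_scope.

Lemma integrable_density : mu.-integrable setT (fun x => (p x)%:E).
Proof.
apply/integrableP; split; first exact/measurable_EFinP.
under eq_integral do rewrite gee0_abs ?lee_fin //.
by rewrite p_int1 ltry.
Qed.

Lemma integrable_bounded_mul_density (g : T -> R) (M : R) :
  measurable_fun setT g -> (forall x, (`|g x| <= M)%R) ->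
  mu.-integrable setT (fun x => (g x * p x)%:E).
Proof.
move=> g_meas g_le.
apply: (le_integrable measurableT _ _ (integrableZl measurableT M integrable_density)).
  by apply/measurable_EFinP; apply: measurable_funM.
move=> x _; have M_ge0 : (0 <= M)%R := le_trans (normr_ge0 _) (g_le x).
rewrite -EFinM !abse_EFin lee_fin !normrM (ger0_norm (p_ge0 x)) (ger0_norm M_ge0).
by rewrite ler_wpM2r.
Qed.

Lemma EX_fin_num (g : T -> R) (M : R) :
  measurable_fun setT g -> (forall x, (`|g x| <= M)%R) -> EX mu p g \is a fin_num.
Proof.
move=> g_meas g_le; rewrite /EX; apply: (integrable_fin_num measurableT).
exact: integrable_bounded_mul_density g_le.
Qed.

Lemma EX_add_scale_le (f g : T -> R) (Mf Mg c k : R) :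
  measurable_fun setT f -> (forall x, (`|f x| <= Mf)%R) ->
  measurable_fun setT g -> (forall x, (`|g x| <= Mg)%R) ->
  (forall x, (f x + c * g x <= k)%R) ->
  EX mu p f + c%:E * EX mu p g <= k%:E.
Proof.
move=> f_meas f_le g_meas g_le fg_le.
have f_int := integrable_bounded_mul_density f_meas f_le.
have g_int := integrable_bounded_mul_density g_meas g_le.
have cg_int := integrableZl measurableT c g_int.
have kp_int := integrableZl measurableT k integrable_density.
have -> : k%:E = \int[mu]_(x in setT) (k%:E * (p x)%:E).
  by rewrite integralZl ?p_int1 ?mule1 //; exact: integrable_density.
rewrite /EX -(integralZl measurableT g_int) -(integralD measurableT f_int cg_int).
apply: le_integral => //; first exact: integrableD.
move=> x _; rewrite -!EFinM -EFinD lee_fin mulrA -mulrDl.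
by rewrite ler_wpM2r.
Qed.

End ExpectationBound.

Theorem mainTheorem11 (d : measure_display) (T : measurableType d) (R : realType)
  (mu : {measure set T -> \bar R}) (p P1 P2 : T -> R)
  (p_meas : measurable_fun [set: T] p)
  (p_ge0 : forall x, 0 <= p x)
  (p_int1 : (\int[mu]_(x in [set: T]) (p x)%:E = 1)%E)
  (P1_meas : measurable_fun [set: T] P1)
  (P2_meas : measurable_fun [set: T] P2)
  (P1_ge0 : forall x, 0 <= P1 x)
  (P2_ge0 : forall x, 0 <= P2 x)
  (P_sum1 : forall x, P1 x + P2 x = 1) :
  (Pe mu p P1 P2 <=
   (1 / 2)%:E * (1%:E - (4 / Num.sqrt 2)%:E * MbarN2G mu p P2))%E.
Proof.
have P2_01 x : 0 <= P2 x <= 1.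
  by apply/andP; split; have := P_sum1 x; have := P1_ge0 x; have := P2_ge0 x; lra.
have -> : P1 = fun x => 1 - P2 x by apply/funext => x; rewrite -(P_sum1 x) addrK.
set g := fun x => Num.min (1 - P2 x) (P2 x).
have g_meas : measurable_fun setT g.
  by apply: measurable_minr => //; exact: measurable_funB.
have g_le1 x : `|g x| <= 1.
  have /andP[P2x_ge0 P2x_le1] := P2_01 x.
  rewrite /g ger0_norm; first by rewrite ge_min P2x_le1 orbT.
  by rewrite le_min subr_ge0 P2x_le1.
have star_meas : measurable_fun setT (fun x => fN2G_star (P2 x)).
  rewrite (_ : (fun x => _) = fN2G_star_closed \o P2); last first.
    by apply/funext => x; rewrite /= fN2G_starE.
  exact: measurableT_comp (@measurable_fN2G_star_closed R) P2_meas.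
have star_le1 x : `|fN2G_star (P2 x)| <= 1 by exact: normr_fN2G_star_le1.
have := EX_add_scale_le p_meas p_ge0 p_int1 g_meas g_le1 star_meas star_le1
  (fun x => minr_add_fN2G_star_le (P2_01 x)).
rewrite /Pe /MbarN2G -/g.
rewrite -(fineK (EX_fin_num p_meas p_ge0 p_int1 g_meas g_le1)).
rewrite -(fineK (EX_fin_num p_meas p_ge0 p_int1 star_meas star_le1)).
move: (fine _) (fine _) => mbar pe.
rewrite -!EFinM -EFinD !lee_fin; lra.
Qed.
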